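(* Let $(M,\Delta,S,\varepsilon)$ be a weak Kac algebra and let $\pi_\varepsilon$ be its counital representation. Then for every unital $*$-representation $\rho$ of $M$ on a finite-dimensional Hilbert space, the representations $\pi_\varepsilon\times\rho$ and $\rho\times\pi_\varepsilon$ are both unitarily equivalent to $\rho$ (i.e., the class of $\pi_\varepsilon$ is a unit of the representation ring of $M$).
   Context: All algebras are finite-dimensional over $\mathbb{C}$; $\varsigma$ denotes the flip and $\mu(x\otimes y)=xy$. A weak Kac algebra is a quadruple $(M,\Delta,S,\varepsilon)$ where $M$ is a finite-dimensional $C^*$-algebra; $\Delta:M\to M\otimes M$ is an injective, not necessarily unital, $*$-homomorphism with $(\Delta\otimes\mathrm{id})\Delta=(\mathrm{id}\otimes\Delta)\Delta$; $S:M\to M$ is a linear, unital, antimultiplicative, $*$-preserving bijection with $S^2=\mathrm{id}$ and $(S\otimes S)\circ\Delta=\varsigma\circ\Delta\circ S$; and $\varepsilon:M\to\mathbb{C}$ is linear with $(\varepsilon\otimes\mathrm{id})\Delta=(\mathrm{id}\otimes\varepsilon)\Delta=\mathrm{id}$, $\varepsilon\circ S=\varepsilon$, $\varepsilon(x^* )=\overline{\varepsilon(x)}$, $(\varepsilon\otimes\varepsilon)((x\otimes1)e(1\otimes y))=\varepsilon(xy)$ for all $x,y$, where $e:=\Delta(1)$, and $(\varepsilon_s\otimes\mathrm{id})\Delta(x)=(1\otimes x)e$ for all $x$, where $\varepsilon_s:=\mu(S\otimes\mathrm{id})\Delta$. Let $\varepsilon_t:=\mu(\mathrm{id}\otimes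 S)\Delta$ and $N_t=\{x\in M:\Delta(x)=e(x\otimes1)=(x\otimes1)e\}$. The functional $\varepsilon$ is positive, and the counital representation $\pi_\varepsilon$ is the GNS representation of $\varepsilon$; concretely it acts on the Hilbert space $N_t$ with inner product $(x,y)=\varepsilon(y^*x)$ by $\pi_\varepsilon(x)\varepsilon_t(y)=\varepsilon_t(xy)$. For representations $\rho_i:M\to B(H_i)$, $i=1,2$, the product $\rho_1\times\rho_2$ is the representation $x\mapsto(\rho_1\otimes\rho_2)(\Delta(x))$ on the subspace $(\rho_1\otimes\rho_2)(e)(H_1\otimes H_2)$. *)

(* A finite-dimensional C*-algebra is modelled as a unital *-subalgebra M
   of the matrix algebra 'M[R[i]]_n (every f.d. C*-algebra arises so);
   M (x) M is the span of the Kronecker products a *t b (a, b in M) inside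
   'M_(n*n).  Linear maps on M are given as globally linear maps on 'M_n
   (any linear map on M extends); all axioms are only imposed on M.      *)
From HB Require Import structures.
From mathcomp Require Import all_boot all_order all_algebra.
From mathcomp Require Import complex mxtens.
From mathcomp Require Import reals.

Set Implicit Arguments.
Unset Strict Implicit.
Unset Printing Implicit Defensive.
Import Order.TTheory GRing.Theory Num.Theory.
Local Open Scope ring_scope.

Section WeakKac.
Variable R : realType.
Local Notation C := (R[i]).

Definition adj {m p} (A : 'M[C]_(m, p)) : 'M[C]_(p, m) := (map_mx (@conjc R) A)^T.

Definition pidx {m p} (i : 'I_m) (j : 'I_p) : 'I_(m * p) := mxtens_index (i, j).

Definition E {n} (i j : 'I_n) : 'M[C]_n := delta_mx i j.

Definition lin {m p q r} (f : 'M[C]_(m, p) -> 'M[C]_(q, r)) :=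
  forall (a : C) x y, f (a *: x + y) = a *: f x + f y.
Definition linf {m p} (f : 'M[C]_(m, p) -> C) :=
  forall (a : C) x y, f (a *: x + y) = a * f x + f y.

(* f (x) g : M_n (x) M_n -> M_p (x) M_q, linear extension of a (x) b |-> f a (x) g b *)
Definition tmap {n p q} (f : 'M[C]_n -> 'M[C]_p) (g : 'M[C]_n -> 'M[C]_q)
  (X : 'M[C]_(n * n)) : 'M[C]_(p * q) :=
  \sum_(i < n) \sum_(j < n) \sum_(k < n) \sum_(l < n)
     X (pidx i k) (pidx j l) *: (f (E i j) *t g (E k l)).

(* (phi (x) id) and (id (x) phi) for a functional phi *)
Definition lslot {n} (phi : 'M[C]_n -> C) (X : 'M[C]_(n * n)) : 'M[C]_n :=
  \matrix_(k, l) \sum_(i < n) \sum_(j < n) X (pidx i k) (pidx j l) * phi (E i j).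
Definition rslot {n} (phi : 'M[C]_n -> C) (X : 'M[C]_(n * n)) : 'M[C]_n :=
  \matrix_(i, j) \sum_(k < n) \sum_(l < n) X (pidx i k) (pidx j l) * phi (E k l).
(* phi (x) psi *)
Definition tscal {n} (phi psi : 'M[C]_n -> C) (X : 'M[C]_(n * n)) : C :=
  \sum_(i < n) \sum_(j < n) \sum_(k < n) \sum_(l < n)
     X (pidx i k) (pidx j l) * phi (E i j) * psi (E k l).
(* multiplication mu (x (x) y) = x y *)
Definition mu {n} (X : 'M[C]_(n * n)) : 'M[C]_n :=
  \sum_(i < n) \sum_(j < n) \sum_(k < n) \sum_(l < n)
     X (pidx i k) (pidx j l) *: (E i j *m E k l).
(* the flip varsigma (x (x) y) = y (x) x *)
Definition flip {n} (X : 'M[C]_(n * n)) : 'M[C]_(n * n) :=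
  \sum_(i < n) \sum_(j < n) \sum_(k < n) \sum_(l < n)
     X (pidx i k) (pidx j l) *: (E k l *t E i j).

Definition eps_s {n} (S : 'M[C]_n -> 'M[C]_n) (D : 'M[C]_n -> 'M[C]_(n * n)) x :=
  mu (tmap S id (D x)).
Definition eps_t {n} (S : 'M[C]_n -> 'M[C]_n) (D : 'M[C]_n -> 'M[C]_(n * n)) x :=
  mu (tmap id S (D x)).

Definition star_subalg {n} (M : 'M[C]_n -> Prop) :=
  [/\ M 1%:M, (forall (a : C) x y, M x -> M y -> M (a *: x + y)),
      (forall x y, M x -> M y -> M (x *m y)) & (forall x, M x -> M (adj x))].

Definition in_tens {n} (M : 'M[C]_n -> Prop) (X : 'M[C]_(n * n)) :=
  exists k (a b : 'I_k -> 'M[C]_n),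
    (forall t, M (a t) /\ M (b t)) /\ X = \sum_(t < k) (a t *t b t).

Record weak_Kac {n} (M : 'M[C]_n -> Prop) (D : 'M[C]_n -> 'M[C]_(n * n))
    (S : 'M[C]_n -> 'M[C]_n) (eps : 'M[C]_n -> C) : Prop := WeakKac {
  wk_alg : star_subalg M;
  wk_Dlin : lin D;
  wk_DM : forall x, M x -> in_tens M (D x);
  wk_Dmul : forall x y, M x -> M y -> D (x *m y) = D x *m D y;
  wk_Dadj : forall x, M x -> D (adj x) = adj (D x);
  wk_Dinj : forall x y, M x -> M y -> D x = D y -> x = y;
  wk_coassoc : forall x, M x -> forall i j k i' j' k',
     tmap D id (D x) (pidx (pidx i j) k) (pidx (pidx i' j') k')
   = tmap id D (D x) (pidx i (pidx j k)) (pidx i' (pidx j' k'));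
  wk_Slin : lin S;
  wk_SM : forall x, M x -> M (S x);
  wk_S1 : S 1%:M = 1%:M;
  wk_Smul : forall x y, M x -> M y -> S (x *m y) = S y *m S x;
  wk_Sadj : forall x, M x -> S (adj x) = adj (S x);
  wk_SS : forall x, M x -> S (S x) = x;
  wk_SD : forall x, M x -> tmap S S (D x) = flip (D (S x));
  wk_elin : linf eps;
  wk_eDl : forall x, M x -> lslot eps (D x) = x;
  wk_eDr : forall x, M x -> rslot eps (D x) = x;
  wk_eS : forall x, M x -> eps (S x) = eps x;
  wk_eadj : forall x, M x -> eps (adj x) = conjc (eps x);
  wk_ee : forall x y, M x -> M y ->
     tscal eps eps ((x *t 1%:M) *m D 1%:M *m (1%:M *t y)) = eps (x *m y);
  wk_es : forall x, M x -> tmap (eps_s S D) id (D x) = (1%:M *t x) *m D 1%:M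
}.

Definition Nt {n} (M : 'M[C]_n -> Prop) (D : 'M[C]_n -> 'M[C]_(n * n)) x :=
  [/\ M x, D x = D 1%:M *m (x *t 1%:M) & D x = (x *t 1%:M) *m D 1%:M].

(* A (finite-dimensional) representation: a subspace [rspace] of the column
   space C^rdim, an inner product <u,v> = v^* G u given by the Gram matrix
   [rgram], and the action x |-> ract x (a matrix acting on columns). *)
Record rep (n : nat) := Rep {
  rdim : nat;
  rspace : 'cV[C]_rdim -> Prop;
  rgram : 'M[C]_rdim;
  ract : 'M[C]_n -> 'M[C]_rdim }.

Arguments rdim {n} r.
Arguments rspace {n} r _.
Arguments rgram {n} r.
Arguments ract {n} r _.

Definition ip {n} (r : rep n) (u v : 'cV[C]_(rdim r)) : C :=
  (adj v *m rgram r *m u) 0 0.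
Arguments ip {n} r u v.

(* a representation on the Hilbert space C^d (standard inner product) *)
Definition hilb_rep {n d} (rho : 'M[C]_n -> 'M[C]_d) : rep n :=
  @Rep n d (fun _ => True) 1%:M rho.

Definition unital_star_rep {n d} (M : 'M[C]_n -> Prop) (rho : 'M[C]_n -> 'M[C]_d) :=
  [/\ lin rho, rho 1%:M = 1%:M,
      (forall x y, M x -> M y -> rho (x *m y) = rho x *m rho y) &
      (forall x, M x -> rho (adj x) = adj (rho x))].

Definition cvec {n} (x : 'M[C]_n) : 'cV[C]_(n * n) := (mxvec x)^T.
Definition Eb {n} (b : 'I_(n * n)) : 'M[C]_n := vec_mx (delta_mx 0 b).

(* the counital representation pi_eps : on N_t with inner product
   (x, y) = eps (y^* x), pi_eps(x) v = eps_t (x v) for v in N_t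
   (i.e. pi_eps(x) eps_t(y) = eps_t(x y)), transported to coordinates *)
Definition counital_rep {n} (M : 'M[C]_n -> Prop) (D : 'M[C]_n -> 'M[C]_(n * n))
    (S : 'M[C]_n -> 'M[C]_n) (eps : 'M[C]_n -> C) : rep n :=
  @Rep n (n * n)
    (fun v => exists x, Nt M D x /\ v = cvec x)
    (\matrix_(a, b) eps (adj (Eb a) *m Eb b))
    (fun x => \matrix_(a, b) (cvec (eps_t S D (x *m Eb b))) a 0).

Definition tens_span {d1 d2} (W1 : 'cV[C]_d1 -> Prop) (W2 : 'cV[C]_d2 -> Prop)
    (w : 'cV[C]_(d1 * d2)) :=
  exists k (u : 'I_k -> 'cV[C]_d1) (v : 'I_k -> 'cV[C]_d2),
    (forall t, W1 (u t) /\ W2 (v t)) /\ w = \sum_(t < k) (u t *t v t).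

(* product rho1 x rho2 : x |-> (rho1 (x) rho2)(D x) on (rho1 (x) rho2)(e)(H1 (x) H2) *)
Definition prod_rep {n} (D : 'M[C]_n -> 'M[C]_(n * n)) (r1 r2 : rep n) : rep n :=
  @Rep n (rdim r1 * rdim r2)
    (fun v => exists w, tens_span (rspace r1) (rspace r2) w /\
                        v = tmap (ract r1) (ract r2) (D 1%:M) *m w)
    (rgram r1 *t rgram r2)
    (fun x => tmap (ract r1) (ract r2) (D x)).

Definition unit_equiv {n} (M : 'M[C]_n -> Prop) (r1 r2 : rep n) :=
  exists U : 'M[C]_(rdim r2, rdim r1),
  [/\ forall u, rspace r1 u -> rspace r2 (U *m u),
      forall v, rspace r2 v -> exists2 u, rspace r1 u & U *m u = v,
      forall u u', rspace r1 u -> rspace r1 u' -> U *m u = U *m u' -> u = u',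
      forall u u', rspace r1 u -> rspace r1 u' ->
                   ip r2 (U *m u) (U *m u') = ip r1 u u'
    & forall x u, M x -> rspace r1 u ->
                  U *m (ract r1 x *m u) = ract r2 x *m (U *m u)].

End WeakKac.

From HB Require Import structures.
From mathcomp Require Import all_boot all_order all_algebra.
From mathcomp Require Import complex mxtens.
From mathcomp Require Import reals.
Set Implicit Arguments.
Unset Strict Implicit.
Unset Printing Implicit Defensive.
Import Order.TTheory GRing.Theory Num.Theory.
Local Open Scope ring_scope.

(* Write e = D 1 = \sum_t a_t (x) b_t.  The space of pi_eps x rho is spanned by the
   vectors v(z, xi) = (pi_eps (x) rho)(e)(z (x) xi) = \sum_t eps_t(a_t z) (x) rho(b_t) xi
   with z in N_t.  Since \sum_t eps_t(a_t z) b_t = z, the map z (x) xi |-> rho(z) xi sends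
   v(z, xi) to rho(z) xi, and xi |-> v(1, xi) inverts it.  It is isometric because
   eps(eps_t(p)^* eps_t(q)) = eps(p^* q) turns the inner product of v(z, xi) and
   v(z', xi') into that of rho(z) xi and rho(z') xi', through
   (eps (x) id)(D(z')^* D(z)) = z'^* z; it intertwines because D(z) = e (z (x) 1) gives
   (eps (x) id)(D(x) e (z (x) 1)) = x z.  For rho x pi_eps the map is xi (x) z |-> rho(S z) xi:
   the antipode swaps the two legs of e, and S z = \sum_t S(eps_t(b_t z)) a_t. *)

Local Notation space r := (@rspace _ _ r).
Local Notation inner r := (@ip _ _ r).

(** * Linear maps and Kronecker products *)

Section MatrixTensors.
Variable R : realType.
Local Notation C := (R[i]).
Local Notation E := (@E R _).

Section LinearMaps.
Variables (m p q r : nat) (f : 'M[C]_(m, p) -> 'M[C]_(q, r)).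
Hypothesis f_lin : lin f.

Lemma lin0 : f 0 = 0.
Proof.
by have := f_lin 1 0 0; rewrite !scale1r !addr0 => h; apply: (addrI (f 0)); rewrite addr0 -h.
Qed.

Lemma linD x y : f (x + y) = f x + f y.
Proof. by have := f_lin 1 x y; rewrite !scale1r. Qed.

Lemma linZ a x : f (a *: x) = a *: f x.
Proof. by rewrite -[a *: x]addr0 f_lin lin0 addr0. Qed.

Lemma lin_sum I (s : seq I) (P : pred I) (F : I -> 'M_(m, p)) :
  f (\sum_(i <- s | P i) F i) = \sum_(i <- s | P i) f (F i).
Proof. by elim/big_rec2: _ => [|i y1 y2 _ <-]; rewrite ?lin0 ?linD. Qed.
End LinearMaps.

Section LinearForms.
Variables (m p : nat) (f : 'M[C]_(m, p) -> C).
Hypothesis f_lin : linf f.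

Lemma linf0 : f 0 = 0.
Proof.
by have := f_lin 1 0 0; rewrite scale1r mul1r !addr0 => h; apply: (addrI (f 0)); rewrite addr0 -h.
Qed.

Lemma linfD x y : f (x + y) = f x + f y.
Proof. by have := f_lin 1 x y; rewrite scale1r mul1r. Qed.

Lemma linfZ a x : f (a *: x) = a * f x.
Proof. by rewrite -[a *: x]addr0 f_lin linf0 addr0. Qed.

Lemma linf_sum I (s : seq I) (P : pred I) (F : I -> 'M_(m, p)) :
  f (\sum_(i <- s | P i) F i) = \sum_(i <- s | P i) f (F i).
Proof. by elim/big_rec2: _ => [|i y1 y2 _ <-]; rewrite ?linf0 ?linfD. Qed.
End LinearForms.

Lemma lin_id m p : lin (@id 'M[C]_(m, p)).
Proof. by []. Qed.

Lemma lin_comp m1 p1 m2 p2 m3 p3 (f : 'M[C]_(m2, p2) -> 'M[C]_(m3, p3))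
    (g : 'M[C]_(m1, p1) -> 'M[C]_(m2, p2)) :
  lin f -> lin g -> lin (fun x => f (g x)).
Proof. by move=> f_lin g_lin a x y; rewrite g_lin f_lin. Qed.

Lemma lin_mulmxr m p q (B : 'M[C]_(p, q)) : lin (fun X : 'M[C]_(m, p) => X *m B).
Proof. by move=> a x y; rewrite mulmxDl scalemxAl. Qed.

Lemma lin_mulmx m p q (B : 'M[C]_(m, p)) : lin (fun X : 'M[C]_(p, q) => B *m X).
Proof. by move=> a x y; rewrite mulmxDr scalemxAr. Qed.

Lemma adjE m p (A : 'M[C]_(m, p)) i j : adj A i j = conjc (A j i).
Proof. by rewrite /adj !mxE. Qed.

Lemma adjK m p (A : 'M[C]_(m, p)) : adj (adj A) = A.
Proof. by apply/matrixP=> i j; rewrite !adjE conjcK. Qed.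

Lemma adjM m p q (A : 'M[C]_(m, p)) (B : 'M[C]_(p, q)) : adj (A *m B) = adj B *m adj A.
Proof.
apply/matrixP=> i j; rewrite adjE !mxE rmorph_sum; apply: eq_bigr => k _.
by rewrite !adjE rmorphM mulrC.
Qed.

Lemma adj_scale m p a (A : 'M[C]_(m, p)) : adj (a *: A) = conjc a *: adj A.
Proof. by apply/matrixP=> i j; rewrite [RHS]mxE !adjE mxE rmorphM. Qed.

Lemma adj_sum m p I (s : seq I) (P : pred I) (F : I -> 'M[C]_(m, p)) :
  adj (\sum_(i <- s | P i) F i) = \sum_(i <- s | P i) adj (F i).
Proof.
by elim/big_rec2: _ => [|i y1 y2 _ <-]; apply/matrixP=> i' j';
  rewrite !mxE ?rmorph0 ?rmorphD.
Qed.

Lemma adj_tens m p q r (A : 'M[C]_(m, p)) (B : 'M[C]_(q, r)) :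
  adj (A *t B) = adj A *t adj B.
Proof. by rewrite /adj map_mxT trmx_tens. Qed.

Lemma adj_mx1 m : adj (1%:M : 'M[C]_m) = 1%:M.
Proof.
by apply/matrixP=> i j; rewrite adjE !mxE eq_sym; case: (i == j); rewrite ?rmorph0 ?rmorph1.
Qed.

Lemma entry_mulmx_delta m p (A : 'M[C]_(m, p)) i j : A i j = (A *m delta_mx j (0 : 'I_1)) i 0.
Proof. by rewrite -colE mxE. Qed.

Lemma big_pidx (V : nmodType) m p (F : 'I_(m * p) -> V) :
  \sum_(q < m * p) F q = \sum_(i < m) \sum_(j < p) F (pidx i j).
Proof.
rewrite pair_big (reindex (@mxtens_index m p)) /=; last first.
  by exists (@mxtens_unindex m p) => x _; rewrite ?mxtens_indexK ?mxtens_unindexK.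
by apply: eq_bigr => -[i j].
Qed.

Lemma tensmx_pidx m p q r (A : 'M[C]_(m, p)) (B : 'M[C]_(q, r)) i k j l :
  (A *t B) (pidx i k) (pidx j l) = A i j * B k l.
Proof. exact: tensmxE. Qed.

Lemma pidx00 : (0 : 'I_(1 * 1)) = pidx (0 : 'I_1) (0 : 'I_1).
Proof. exact: val_inj. Qed.

Section TensorBilinear.
Variables m p q r : nat.
Implicit Types (A : 'M[C]_(m, p)) (B : 'M[C]_(q, r)).

Lemma tensmxDl A1 A2 B : (A1 + A2) *t B = A1 *t B + A2 *t B.
Proof. by apply/matrixP=> x y; rewrite !mxE mulrDl. Qed.

Lemma tensmxDr A B1 B2 : A *t (B1 + B2) = A *t B1 + A *t B2.
Proof. by apply/matrixP=> x y; rewrite !mxE mulrDr. Qed.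

Lemma tensmxZl a A B : (a *: A) *t B = a *: (A *t B).
Proof. by apply/matrixP=> x y; rewrite !mxE mulrA. Qed.

Lemma tensmxZr a A B : A *t (a *: B) = a *: (A *t B).
Proof. by apply/matrixP=> x y; rewrite !mxE mulrCA. Qed.

Lemma tensmx_suml I (s : seq I) (P : pred I) (F : I -> 'M[C]_(m, p)) B :
  (\sum_(i <- s | P i) F i) *t B = \sum_(i <- s | P i) (F i *t B).
Proof. by elim/big_rec2: _ => [|i y1 y2 _ <-]; rewrite ?tens0mx ?tensmxDl. Qed.

Lemma tensmx_sumr I (s : seq I) (P : pred I) (F : I -> 'M[C]_(q, r)) A :
  A *t (\sum_(i <- s | P i) F i) = \sum_(i <- s | P i) (A *t F i).
Proof. by elim/big_rec2: _ => [|i y1 y2 _ <-]; rewrite ?tensmx0 ?tensmxDr. Qed.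
End TensorBilinear.

Lemma tensmx11 m p : (1%:M : 'M[C]_m) *t (1%:M : 'M[C]_p) = 1%:M.
Proof.
apply/matrixP=> x y; case: (mxtens_indexP x) => i k; case: (mxtens_indexP y) => j l.
rewrite tensmxE !mxE (inj_eq (can_inj (@mxtens_indexK _ _))) xpair_eqE.
by case: (i == j); case: (k == l); rewrite ?mulr1n ?mulr0n ?mulr1 ?mulr0.
Qed.

Lemma tens_delta_mx m p q r (i : 'I_m) (j : 'I_p) (k : 'I_q) (l : 'I_r) :
  delta_mx i j *t delta_mx k l = delta_mx (pidx i k) (pidx j l) :> 'M[C]_(m * q, p * r).
Proof.
apply/matrixP=> x y; case: (mxtens_indexP x) => i0 k0; case: (mxtens_indexP y) => j0 l0.
rewrite tensmxE !mxE /pidx !(inj_eq (can_inj (@mxtens_indexK _ _))) !xpair_eqE.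
by case: (i0 == i); case: (j0 == j); case: (k0 == k); case: (l0 == l);
  rewrite ?mulr1n ?mulr0n ?mulr1 ?mulr0.
Qed.

Lemma tensmx_sum_delta m (X : 'M[C]_(m * m)) :
  X = \sum_(i < m) \sum_(j < m) \sum_(k < m) \sum_(l < m)
        X (pidx i k) (pidx j l) *: (E i j *t E k l).
Proof.
rewrite {1}(matrix_sum_delta X) big_pidx; apply: eq_bigr => i _.
under eq_bigr => k _ do rewrite big_pidx.
rewrite exchange_big; apply: eq_bigr => j _; apply: eq_bigr => k _; apply: eq_bigr => l _.
by rewrite /E tens_delta_mx.
Qed.

Lemma lin_sum_delta m q r (f : 'M[C]_m -> 'M[C]_(q, r)) : lin f ->
  forall a, f a = \sum_(i < m) \sum_(j < m) a i j *: f (E i j).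
Proof.
move=> f_lin a; rewrite {1}(matrix_sum_delta a) lin_sum //; apply: eq_bigr => i _.
by rewrite lin_sum //; apply: eq_bigr => j _; rewrite linZ.
Qed.

Lemma linf_sum_delta m (f : 'M[C]_m -> C) : linf f ->
  forall a, f a = \sum_(i < m) \sum_(j < m) a i j * f (E i j).
Proof.
move=> f_lin a; rewrite {1}(matrix_sum_delta a) linf_sum //; apply: eq_bigr => i _.
by rewrite linf_sum //; apply: eq_bigr => j _; rewrite linfZ.
Qed.

Lemma lin_tens_ext m p q (F G : 'M[C]_(m * m) -> 'M[C]_(p, q)) :
  lin F -> lin G -> (forall x y, F (x *t y) = G (x *t y)) -> F =1 G.
Proof.
move=> F_lin G_lin FG X; rewrite (tensmx_sum_delta X).
do 4![rewrite (lin_sum F_lin) (lin_sum G_lin); apply: eq_bigr => ? _].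
by rewrite (linZ F_lin) (linZ G_lin) FG.
Qed.

(* [tmap], [mu] and [flip] all have this shape. *)
Section TensorKernel.
Variables (V : lmodType C) (m : nat) (K : 'I_m -> 'I_m -> 'I_m -> 'I_m -> V).

Definition tens_kernel (X : 'M[C]_(m * m)) :=
  \sum_(i < m) \sum_(j < m) \sum_(k < m) \sum_(l < m) X (pidx i k) (pidx j l) *: K i j k l.

Lemma tens_kernel_lin a X Y :
  tens_kernel (a *: X + Y) = a *: tens_kernel X + tens_kernel Y.
Proof.
rewrite /tens_kernel.
do 4![rewrite scaler_sumr -big_split; apply: eq_bigr => ? _].
by rewrite !mxE scalerDl scalerA.
Qed.

Lemma tens_kernel_tens (a b : 'M[C]_m) : tens_kernel (a *t b) =
  \sum_(i < m) \sum_(j < m) a i j *: \sum_(k < m) \sum_(l < m) b k l *: K i j k l.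
Proof.
apply: eq_bigr => i _; apply: eq_bigr => j _; rewrite scaler_sumr; apply: eq_bigr => k _.
by rewrite scaler_sumr; apply: eq_bigr => l _; rewrite tensmx_pidx scalerA.
Qed.
End TensorKernel.

Section TensorMaps.
Variable m : nat.
Implicit Types a b : 'M[C]_m.

Lemma tmap_lin p q (f : 'M[C]_m -> 'M[C]_p) (g : 'M[C]_m -> 'M[C]_q) : lin (tmap f g).
Proof. exact: (tens_kernel_lin (fun i j k l => f (E i j) *t g (E k l))). Qed.

Lemma tmap_tens p q (f : 'M[C]_m -> 'M[C]_p) (g : 'M[C]_m -> 'M[C]_q) :
  lin f -> lin g -> forall a b, tmap f g (a *t b) = f a *t g b.
Proof.
move=> f_lin g_lin a b.
rewrite [LHS](tens_kernel_tens (fun i j k l => f (E i j) *t g (E k l))).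
rewrite (lin_sum_delta f_lin a) tensmx_suml; apply: eq_bigr => i _.
rewrite tensmx_suml; apply: eq_bigr => j _.
rewrite tensmxZl (lin_sum_delta g_lin b) tensmx_sumr; congr (_ *: _).
apply: eq_bigr => k _; rewrite tensmx_sumr; apply: eq_bigr => l _.
by rewrite tensmxZr.
Qed.

Lemma mu_lin : lin (@mu R m).
Proof. exact: (tens_kernel_lin (fun i j k l => E i j *m E k l)). Qed.

Lemma mu_tens a b : mu (a *t b) = a *m b.
Proof.
rewrite [LHS](tens_kernel_tens (fun i j k l => E i j *m E k l)).
rewrite [in RHS](matrix_sum_delta a) mulmx_suml; apply: eq_bigr => i _.
rewrite mulmx_suml; apply: eq_bigr => j _.
rewrite -scalemxAl [in RHS](matrix_sum_delta b) mulmx_sumr; congr (_ *: _).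
apply: eq_bigr => k _; rewrite mulmx_sumr; apply: eq_bigr => l _.
by rewrite scalemxAr.
Qed.

Lemma flip_lin : lin (@flip R m).
Proof. exact: (tens_kernel_lin (fun i j k l => E k l *t E i j)). Qed.

Lemma flip_tens a b : flip (a *t b) = b *t a.
Proof.
rewrite [LHS](tens_kernel_tens (fun i j k l => E k l *t E i j)).
rewrite [in RHS](matrix_sum_delta a) tensmx_sumr; apply: eq_bigr => i _.
rewrite tensmx_sumr; apply: eq_bigr => j _.
rewrite tensmxZr [in RHS](matrix_sum_delta b) tensmx_suml; congr (_ *: _).
apply: eq_bigr => k _; rewrite tensmx_suml; apply: eq_bigr => l _.
by rewrite tensmxZl.
Qed.

Lemma flipK : cancel (@flip R m) (@flip R m).
Proof.
apply: (lin_tens_ext (F := fun X => flip (flip X)) (G := id)) => //.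
- exact: lin_comp flip_lin flip_lin.
- by move=> x y; rewrite !flip_tens.
Qed.

Variable phi : 'M[C]_m -> C.
Hypothesis phi_lin : linf phi.

Lemma lslot_lin : lin (lslot phi).
Proof.
move=> a X Y; apply/matrixP=> k l; rewrite !mxE.
do 2![rewrite mulr_sumr -big_split; apply: eq_bigr => ? _].
by rewrite !mxE mulrDl mulrA.
Qed.

Lemma lslot_tens a b : lslot phi (a *t b) = phi a *: b.
Proof.
apply/matrixP=> k l; rewrite !mxE (linf_sum_delta phi_lin a) mulr_suml; apply: eq_bigr => i _.
by rewrite mulr_suml; apply: eq_bigr => j _; rewrite tensmx_pidx mulrAC.
Qed.

Lemma rslot_lin : lin (rslot phi).
Proof.
move=> a X Y; apply/matrixP=> i j; rewrite !mxE.
do 2![rewrite mulr_sumr -big_split; apply: eq_bigr => ? _].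
by rewrite !mxE mulrDl mulrA.
Qed.

Lemma rslot_tens a b : rslot phi (a *t b) = phi b *: a.
Proof.
apply/matrixP=> i j; rewrite !mxE (linf_sum_delta phi_lin b) mulr_suml; apply: eq_bigr => k _.
by rewrite mulr_suml; apply: eq_bigr => l _; rewrite tensmx_pidx [RHS]mulrC mulrA.
Qed.

Lemma lslot_mulmxr X b : lslot phi (X *m (1%:M *t b)) = lslot phi X *m b.
Proof.
apply: (lin_tens_ext (F := fun X => lslot phi (X *m (1%:M *t b)))
                     (G := fun X => lslot phi X *m b)) => [||x y].
- exact: lin_comp lslot_lin (lin_mulmxr _).
- exact: lin_comp (lin_mulmxr _) lslot_lin.
by rewrite tensmx_mul mulmx1 !lslot_tens scalemxAl.
Qed.

Lemma lslot_mulmx X b : lslot phi ((1%:M *t b) *m X) = b *m lslot phi X.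
Proof.
apply: (lin_tens_ext (F := fun X => lslot phi ((1%:M *t b) *m X))
                     (G := fun X => b *m lslot phi X)) => [||x y].
- exact: lin_comp lslot_lin (lin_mulmx _).
- exact: lin_comp (lin_mulmx _) lslot_lin.
by rewrite tensmx_mul mul1mx !lslot_tens scalemxAr.
Qed.

Lemma rslot_tmapl (f : 'M[C]_m -> 'M[C]_m) : lin f ->
  forall X, rslot phi (tmap f id X) = f (rslot phi X).
Proof.
move=> f_lin; apply: (lin_tens_ext (F := fun X => rslot phi (tmap f id X))
                                   (G := fun X => f (rslot phi X))) => [||x y].
- exact: lin_comp rslot_lin (tmap_lin _ _).
- exact: lin_comp f_lin rslot_lin.
by rewrite tmap_tens // !rslot_tens (linZ f_lin).
Qed.

Lemma tscal_lin (psi : 'M[C]_m -> C) : linf (tscal phi psi).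
Proof.
move=> a X Y; rewrite /tscal.
do 4![rewrite mulr_sumr -big_split; apply: eq_bigr => ? _].
by rewrite !mxE !mulrDl !mulrA.
Qed.

Lemma tscal_tens (psi : 'M[C]_m -> C) : linf psi ->
  forall a b, tscal phi psi (a *t b) = phi a * psi b.
Proof.
move=> psi_lin a b; rewrite /tscal (linf_sum_delta phi_lin a) mulr_suml; apply: eq_bigr => i _.
rewrite mulr_suml; apply: eq_bigr => j _.
rewrite (linf_sum_delta psi_lin b) mulr_sumr; apply: eq_bigr => k _.
rewrite mulr_sumr; apply: eq_bigr => l _.
by rewrite tensmx_pidx -!mulrA; congr (_ * _); rewrite mulrCA.
Qed.
End TensorMaps.

Lemma tensmx_sandwich m k (c d : 'I_k -> 'M[C]_m) (x y : 'M[C]_m) :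
  (x *t 1%:M) *m (\sum_(t < k) (c t *t d t)) *m (1%:M *t y) =
  \sum_(t < k) ((x *m c t) *t (d t *m y)).
Proof.
by rewrite mulmx_sumr mulmx_suml; apply: eq_bigr => t _; rewrite !tensmx_mul mul1mx mulmx1.
Qed.

Lemma tensmx_sandwich_flip m k (c d : 'I_k -> 'M[C]_m) (x y : 'M[C]_m) :
  (1%:M *t y) *m (\sum_(t < k) (c t *t d t)) *m (x *t 1%:M) =
  \sum_(t < k) ((c t *m x) *t (y *m d t)).
Proof.
by rewrite mulmx_sumr mulmx_suml; apply: eq_bigr => t _; rewrite !tensmx_mul mul1mx mulmx1.
Qed.

End MatrixTensors.

(** * Products with a representation on a Hilbert space *)

Section ProductRepresentations.
Variable R : realType.
Local Notation C := (R[i]).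

Lemma ip_sum n (r : rep R n) k k' (u : 'I_k -> 'cV[C]_(rdim r))
    (v : 'I_k' -> 'cV[C]_(rdim r)) :
  inner r (\sum_(s < k) u s) (\sum_(t < k') v t) =
  \sum_(t < k') \sum_(s < k) inner r (u s) (v t).
Proof.
rewrite /ip adj_sum !mulmx_suml summxE; apply: eq_bigr => t _.
by rewrite mulmx_sumr summxE.
Qed.

Lemma ract_prod_rep n D (r1 r2 : rep R n) x :
  ract (prod_rep D r1 r2) x = tmap (ract r1) (ract r2) (D x).
Proof. by []. Qed.

Lemma rgram_hilb_rep n d (rho : 'M[C]_n -> 'M[C]_d) : rgram (hilb_rep rho) = 1%:M.
Proof. by []. Qed.

Section ProductWithHilbertRepresentation.
Variables (n : nat) (M : 'M[C]_n -> Prop) (D : 'M[C]_n -> 'M[C]_(n * n)) (r1 r2 : rep R n).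
Local Notation r12 := (prod_rep D r1 r2).
Local Notation gen u1 u2 := (tmap (ract r1) (ract r2) (D 1%:M) *m (u1 *t u2)).

Lemma prod_rep_space_sum u : space r12 u ->
  exists k (u1 : 'I_k -> 'cV[C]_(rdim r1)) (u2 : 'I_k -> 'cV[C]_(rdim r2)),
    (forall t, space r1 (u1 t) /\ space r2 (u2 t)) /\ u = \sum_(t < k) gen (u1 t) (u2 t).
Proof. by case=> w [[k [u1 [u2 [W ->]]]] ->]; exists k, u1, u2; rewrite mulmx_sumr. Qed.

Lemma prod_rep_space_gen u1 u2 : space r1 u1 -> space r2 u2 -> space r12 (gen u1 u2).
Proof.
move=> W1 W2; exists (u1 *t u2); split=> //.
by exists 1, (fun=> u1), (fun=> u2); rewrite big_ord1.
Qed.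

(* It suffices to check that [U] is a unitary intertwiner on the spanning
   vectors [gen u1 u2]; injectivity comes from a linear right inverse [V] of [U]
   that is also a left inverse on these vectors. *)
Variables (d : nat) (rho : 'M[C]_n -> 'M[C]_d).
Variables (U : 'M[C]_(d, rdim r1 * rdim r2)) (V : 'cV[C]_d -> 'cV[C]_(rdim r1 * rdim r2)).
Hypotheses (V_lin : lin V) (V_space : forall v, space r12 (V v)).
Hypothesis UV : forall v, U *m V v = v.
Hypothesis VU_gen : forall u1 u2, space r1 u1 -> space r2 u2 ->
  V (U *m gen u1 u2) = gen u1 u2.
Hypothesis U_gen_isometry : forall u1 u2 u1' u2',
  space r1 u1 -> space r2 u2 -> space r1 u1' -> space r2 u2' ->
  inner (hilb_rep rho) (U *m gen u1 u2) (U *m gen u1' u2') = inner r12 (gen u1 u2) (gen u1' u2').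
Hypothesis U_gen_intertwines : forall x u1 u2, M x -> space r1 u1 -> space r2 u2 ->
  U *m (ract r12 x *m gen u1 u2) = rho x *m (U *m gen u1 u2).

Lemma VU_prod_space u : space r12 u -> V (U *m u) = u.
Proof.
case/prod_rep_space_sum=> [k [u1 [u2 [W ->]]]]; rewrite mulmx_sumr (lin_sum V_lin).
by apply: eq_bigr => t _; have [W1 W2] := W t; apply: VU_gen.
Qed.

Lemma unit_equiv_prod_hilb_rep : unit_equiv M r12 (hilb_rep rho).
Proof.
exists U; split=> //.
- by move=> v _; exists (V v).
- by move=> u u' Wu Wu' Uu; rewrite -(VU_prod_space Wu) -(VU_prod_space Wu') Uu.
- move=> u u' /prod_rep_space_sum [k [u1 [u2 [W ->]]]] /prod_rep_space_sum [k' [u1' [u2' [W' ->]]]].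
  rewrite !mulmx_sumr !ip_sum; apply: eq_bigr => t _; apply: eq_bigr => s _.
  by have [? ?] := W s; have [? ?] := W' t; apply: U_gen_isometry.
- move=> x u Mx /prod_rep_space_sum [k [u1 [u2 [W ->]]]].
  rewrite !mulmx_sumr; apply: eq_bigr => t _.
  by have [? ?] := W t; apply: U_gen_intertwines.
Qed.
End ProductWithHilbertRepresentation.

End ProductRepresentations.

Section WeakKacAlgebra.
Variable R : realType.
Local Notation C := (R[i]).
Variables (n : nat) (M : 'M[C]_n -> Prop) (D : 'M[C]_n -> 'M[C]_(n * n))
  (S : 'M[C]_n -> 'M[C]_n) (eps : 'M[C]_n -> C).
Hypothesis HW : weak_Kac M D S eps.

Local Notation e := (D 1%:M).
Local Notation eps_t := (eps_t S D).
Local Notation eps_s := (eps_s S D).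

Lemma M1 : M 1%:M. Proof. by case: (wk_alg HW). Qed.
Lemma Mmul x y : M x -> M y -> M (x *m y). Proof. by case: (wk_alg HW) => _ _ + _; apply. Qed.
Lemma Madj x : M x -> M (adj x). Proof. by case: (wk_alg HW) => _ _ _; apply. Qed.
Lemma MS x : M x -> M (S x). Proof. exact: (wk_SM HW). Qed.

Lemma MZD c x y : M x -> M y -> M (c *: x + y).
Proof. by case: (wk_alg HW) => _ + _ _; apply. Qed.

Lemma M0 : M 0. Proof. by have := MZD (-1) M1 M1; rewrite scaleN1r addNr. Qed.
Lemma MZ c x : M x -> M (c *: x).
Proof. by move=> Mx; rewrite -[_ *: _]addr0; apply: MZD => //; apply: M0. Qed.

Lemma MD x y : M x -> M y -> M (x + y).
Proof. by move=> Mx My; rewrite -[x]scale1r; apply: MZD. Qed.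

Lemma Msum I (s : seq I) (P : pred I) (F : I -> 'M_n) :
  (forall i, M (F i)) -> M (\sum_(i <- s | P i) F i).
Proof. by move=> MF; elim/big_rec: _ => [|i x _ Mx]; [apply: M0 | apply: MD]. Qed.

Lemma D_lin : lin D. Proof. exact: (wk_Dlin HW). Qed.
Lemma S_lin : lin S. Proof. exact: (wk_Slin HW). Qed.
Lemma eps_lin : linf eps. Proof. exact: (wk_elin HW). Qed.

Create HintDb weak_Kac.
#[local] Hint Resolve M1 Mmul Madj MS MZ MD M0 : weak_Kac.
Local Ltac inM := try lazymatch goal with
  | |- M _ => solve [auto 12 with weak_Kac]
  | |- Nt _ _ _ => assumption
  end.

Lemma eps_t_lin : lin eps_t.
Proof. exact: lin_comp (@mu_lin R n) (lin_comp (tmap_lin _ _) D_lin). Qed.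
Lemma eps_s_lin : lin eps_s.
Proof. exact: lin_comp (@mu_lin R n) (lin_comp (tmap_lin _ _) D_lin). Qed.

Lemma D_mul x y : M x -> M y -> D (x *m y) = D x *m D y. Proof. exact: (wk_Dmul HW). Qed.
Lemma D_adj x : M x -> D (adj x) = adj (D x). Proof. exact: (wk_Dadj HW). Qed.
Lemma SK x : M x -> S (S x) = x. Proof. exact: (wk_SS HW). Qed.
Lemma S_mul x y : M x -> M y -> S (x *m y) = S y *m S x. Proof. exact: (wk_Smul HW). Qed.
Lemma eps_S x : M x -> eps (S x) = eps x. Proof. exact: (wk_eS HW). Qed.
Lemma lslot_eps_D x : M x -> lslot eps (D x) = x. Proof. exact: (wk_eDl HW). Qed.
Lemma rslot_eps_D x : M x -> rslot eps (D x) = x. Proof. exact: (wk_eDr HW). Qed.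

Lemma eps_adj x : M x -> eps (adj x) = conjc (eps x). Proof. exact: (wk_eadj HW). Qed.
Lemma eps_adjV x : M x -> eps x = conjc (eps (adj x)).
Proof. by move=> Mx; rewrite eps_adj // conjcK. Qed.

Lemma S_inj x y : M x -> M y -> S x = S y -> x = y.
Proof. by move=> Mx My Sxy; rewrite -(SK Mx) Sxy SK. Qed.

Lemma D_S x : M x -> D (S x) = flip (tmap S S (D x)).
Proof. by move=> Mx; rewrite (wk_SD HW Mx) flipK. Qed.

Lemma eps_t_S x : M x -> eps_t x = S (eps_s (S x)).
Proof.
move=> Mx; have [k [c [d [Mcd Dx]]]] := wk_DM HW Mx.
rewrite /eps_s /eps_t D_S // Dx.
rewrite (lin_sum (tmap_lin S S)) (lin_sum (@flip_lin R n)) (lin_sum (tmap_lin S id)).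
rewrite (lin_sum (tmap_lin id S)) !(lin_sum (@mu_lin R n)) (lin_sum S_lin).
apply: eq_bigr => t _; have [Mc Md] := Mcd t.
rewrite (tmap_tens S_lin S_lin) flip_tens (tmap_tens S_lin (@lin_id _ n n)).
by rewrite (tmap_tens (@lin_id _ n n) S_lin) !mu_tens S_mul ?SK; inM.
Qed.

Lemma e_idem : e *m e = e.
Proof. by rewrite -D_mul ?mulmx1 //; apply: M1. Qed.

Lemma adj_e : adj e = e.
Proof. by have := D_adj M1; rewrite adj_mx1 => <-. Qed.

Lemma eps_s_rslot w : M w -> eps_s w = rslot eps ((1%:M *t w) *m e).
Proof.
move=> Mw; rewrite -(wk_es HW Mw) (rslot_tmapl eps_lin eps_s_lin).
by rewrite rslot_eps_D.
Qed.

Lemma tscal_eps_sum k (c d : 'I_k -> 'M[C]_n) :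
  tscal eps eps (\sum_(t < k) (c t *t d t)) = \sum_(t < k) eps (c t) * eps (d t).
Proof.
rewrite (linf_sum (tscal_lin _ _)); apply: eq_bigr => t _.
exact: (tscal_tens eps_lin eps_lin).
Qed.

Section NtFacts.
Variable z : 'M[C]_n.
Hypothesis Nt_z : Nt M D z.
Lemma Nt_M : M z. Proof. by case: Nt_z. Qed.
Lemma Nt_Dl : D z = e *m (z *t 1%:M). Proof. by case: Nt_z. Qed.
Lemma Nt_Dr : D z = (z *t 1%:M) *m e. Proof. by case: Nt_z. Qed.
End NtFacts.
#[local] Hint Resolve Nt_M : weak_Kac.

Lemma Nt1 : Nt M D 1%:M.
Proof. by split; rewrite ?tensmx11 ?mulmx1 ?mul1mx //; apply: M1. Qed.

Lemma Nt_adj z : Nt M D z -> Nt M D (adj z).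
Proof.
move=> Nt_z; split; first by inM.
- by rewrite D_adj ?(Nt_Dr Nt_z) ?adjM ?adj_e ?adj_tens ?adj_mx1; inM.
- by rewrite D_adj ?(Nt_Dl Nt_z) ?adjM ?adj_e ?adj_tens ?adj_mx1; inM.
Qed.

Variables (k : nat) (a b : 'I_k -> 'M[C]_n).
Hypothesis ab_M : forall t, M (a t) /\ M (b t).
Hypothesis eE : e = \sum_(t < k) (a t *t b t).

Lemma Ma t : M (a t). Proof. by case: (ab_M t). Qed.
Lemma Mb t : M (b t). Proof. by case: (ab_M t). Qed.
#[local] Hint Resolve Ma Mb : weak_Kac.

Lemma sum_Sb_Sa : \sum_(t < k) (S (b t) *t S (a t)) = e.
Proof.
rewrite -[in RHS](wk_S1 HW) D_S; last exact: M1.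
rewrite eE (lin_sum (tmap_lin S S)) (lin_sum (@flip_lin R n)).
by apply: eq_bigr => t _; rewrite (tmap_tens S_lin S_lin) flip_tens.
Qed.

Lemma sum_adj_a_b : \sum_(t < k) (adj (a t) *t adj (b t)) = e.
Proof. by rewrite -[RHS]adj_e eE adj_sum; apply: eq_bigr => t _; rewrite adj_tens. Qed.

Lemma mulmx_e_x1 (x : 'M[C]_n) : e *m (x *t 1%:M) = \sum_(t < k) ((a t *m x) *t b t).
Proof. by rewrite eE mulmx_suml; apply: eq_bigr => t _; rewrite tensmx_mul mulmx1. Qed.
Lemma mulmx_x1_e (x : 'M[C]_n) : (x *t 1%:M) *m e = \sum_(t < k) ((x *m a t) *t b t).
Proof. by rewrite eE mulmx_sumr; apply: eq_bigr => t _; rewrite tensmx_mul mul1mx. Qed.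
Lemma mulmx_e_1x (x : 'M[C]_n) : e *m (1%:M *t x) = \sum_(t < k) (a t *t (b t *m x)).
Proof. by rewrite eE mulmx_suml; apply: eq_bigr => t _; rewrite tensmx_mul mulmx1. Qed.
Lemma mulmx_1x_e (x : 'M[C]_n) : (1%:M *t x) *m e = \sum_(t < k) (a t *t (x *m b t)).
Proof. by rewrite eE mulmx_sumr; apply: eq_bigr => t _; rewrite tensmx_mul mul1mx. Qed.

Lemma eps_sE w : M w -> eps_s w = \sum_(t < k) eps (w *m b t) *: a t.
Proof.
move=> Mw; rewrite eps_s_rslot // mulmx_1x_e (lin_sum (rslot_lin _)).
by apply: eq_bigr => t _; rewrite (rslot_tens eps_lin).
Qed.

Lemma eps_t_lslot w : M w -> eps_t w = lslot eps (e *m (w *t 1%:M)).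
Proof.
move=> Mw; rewrite eps_t_S // (eps_sE (MS Mw)) (lin_sum S_lin) -sum_Sb_Sa mulmx_suml.
rewrite (lin_sum (lslot_lin _)); apply: eq_bigr => t _.
rewrite (linZ S_lin) tensmx_mul mulmx1 (lslot_tens eps_lin); congr (_ *: _).
by rewrite -eps_S ?S_mul ?SK; inM.
Qed.

Lemma eps_tE w : M w -> eps_t w = \sum_(t < k) eps (a t *m w) *: b t.
Proof.
move=> Mw; rewrite eps_t_lslot // mulmx_e_x1 (lin_sum (lslot_lin _)).
by apply: eq_bigr => t _; rewrite (lslot_tens eps_lin).
Qed.

Lemma M_eps_t w : M w -> M (eps_t w).
Proof. by move=> Mw; rewrite eps_tE //; apply: Msum => t; inM. Qed.
Lemma M_eps_s w : M w -> M (eps_s w).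
Proof. by move=> Mw; rewrite eps_sE //; apply: Msum => t; inM. Qed.
#[local] Hint Resolve M_eps_t M_eps_s : weak_Kac.

Lemma sum_eps_mul_e x y : M x -> M y ->
  \sum_(t < k) eps (x *m a t) * eps (b t *m y) = eps (x *m y).
Proof. by move=> Mx My; rewrite -(wk_ee HW Mx My) eE tensmx_sandwich tscal_eps_sum. Qed.

(* By [sum_adj_a_b] and [eps_adj], this is the complex conjugate of
   [sum_eps_mul_e] for [adj p] and [adj q]. *)
Lemma sum_eps_mul_e_swap p q : M p -> M q ->
  \sum_(t < k) eps (a t *m p) * eps (q *m b t) = eps (q *m p).
Proof.
move=> Mp Mq.
have -> : \sum_(t < k) eps (a t *m p) * eps (q *m b t) =
          tscal eps eps ((1%:M *t q) *m e *m (p *t 1%:M)).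
  by rewrite eE tensmx_sandwich_flip tscal_eps_sum.
rewrite -sum_adj_a_b tensmx_sandwich_flip tscal_eps_sum.
rewrite [RHS]eps_adjV ?adjM; try inM.
rewrite -(sum_eps_mul_e (Madj Mp) (Madj Mq)) rmorph_sum; apply: eq_bigr => t _.
rewrite rmorphM [eps (adj (a t) *m p)]eps_adjV ?[eps (q *m adj (b t))]eps_adjV; try inM.
by rewrite !adjM !adjK.
Qed.

Lemma eps_mul_eps_t x y : M x -> M y -> eps (y *m eps_t x) = eps (y *m x).
Proof.
move=> Mx My; rewrite eps_tE // mulmx_sumr (linf_sum eps_lin) -sum_eps_mul_e_swap //.
by apply: eq_bigr => t _; rewrite -scalemxAr (linfZ eps_lin).
Qed.

Lemma eps_eps_s_mul x y : M x -> M y -> eps (eps_s x *m y) = eps (x *m y).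
Proof.
move=> Mx My; rewrite eps_sE // mulmx_suml (linf_sum eps_lin) -sum_eps_mul_e_swap //.
by apply: eq_bigr => t _; rewrite -scalemxAl (linfZ eps_lin) mulrC.
Qed.

Lemma eps_t_mul_eps_t c w : M c -> M w -> eps_t (c *m eps_t w) = eps_t (c *m w).
Proof.
move=> Mc Mw; rewrite [eps_t (c *m eps_t w)]eps_tE ?[eps_t (c *m w)]eps_tE; try inM.
by apply: eq_bigr => t _; rewrite !mulmxA eps_mul_eps_t; inM.
Qed.

Lemma eps_adj_eps_t p q : M p -> M q -> eps (adj (eps_t p) *m eps_t q) = eps (adj p *m q).
Proof.
move=> Mp Mq; rewrite eps_mul_eps_t ?[LHS]eps_adjV; try inM.
by rewrite adjM adjK eps_mul_eps_t -?eps_adj ?adjM ?adjK; inM.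
Qed.

Lemma sum_eps_t_mul (I : finType) (p q : I -> 'M[C]_n) : (forall i, M (p i)) ->
  \sum_(i : I) eps_t (p i) *m q i = lslot eps (e *m \sum_(i : I) (p i *t q i)).
Proof.
move=> Mp; rewrite mulmx_sumr (lin_sum (lslot_lin _)); apply: eq_bigr => i _.
by rewrite eps_t_lslot // -(lslot_mulmxr eps_lin) -mulmxA tensmx_mul mulmx1 mul1mx.
Qed.

Lemma sum_eps_t_az_b z : Nt M D z -> \sum_(t < k) eps_t (a t *m z) *m b t = z.
Proof.
move=> Nt_z; rewrite (@sum_eps_t_mul _ (fun t => a t *m z) b) => [|t]; last by inM.
by rewrite -mulmx_e_x1 mulmxA e_idem -(Nt_Dl Nt_z) lslot_eps_D; inM.
Qed.

Lemma sum_eps_t_coproduct x z k' (c d : 'I_k' -> 'M[C]_n) :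
  M x -> Nt M D z -> (forall s, M (c s) /\ M (d s)) -> D x = \sum_(s < k') (c s *t d s) ->
  \sum_(s < k') \sum_(t < k) eps_t (c s *m eps_t (a t *m z)) *m (d s *m b t) = x *m z.
Proof.
move=> Mx Nt_z Mcd Dx.
have -> : \sum_(s < k') \sum_(t < k) eps_t (c s *m eps_t (a t *m z)) *m (d s *m b t) =
          \sum_(st : 'I_k' * 'I_k) eps_t (c st.1 *m (a st.2 *m z)) *m (d st.1 *m b st.2).
  rewrite pair_big /=; apply: eq_bigr => -[s t] _ /=.
  by have [Mc _] := Mcd s; rewrite eps_t_mul_eps_t; inM.
rewrite sum_eps_t_mul => [|[s t]]; last by have [Mc _] := Mcd s; inM.
have -> : \sum_(st : 'I_k' * 'I_k) ((c st.1 *m (a st.2 *m z)) *t (d st.1 *m b st.2)) =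
          D x *m (e *m (z *t 1%:M)).
  rewrite mulmx_e_x1 Dx mulmx_suml; under [RHS]eq_bigr => s _ do rewrite mulmx_sumr.
  by rewrite pair_bigA /=; apply: eq_bigr => -[s t] _ /=; rewrite tensmx_mul.
by rewrite -(Nt_Dl Nt_z) mulmxA -D_mul ?mul1mx -?D_mul ?lslot_eps_D; inM.
Qed.

Lemma sum_eps_adj_eps_t_a z z' : Nt M D z -> Nt M D z' ->
  \sum_(s < k) \sum_(t < k)
     eps (adj (eps_t (a s *m z')) *m eps_t (a t *m z)) *: (adj (b s) *m b t)
  = adj z' *m z.
Proof.
move=> Nt_z Nt_z'.
have -> : \sum_(s < k) \sum_(t < k)
   eps (adj (eps_t (a s *m z')) *m eps_t (a t *m z)) *: (adj (b s) *m b t)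
  = lslot eps (adj (D z') *m D z).
  rewrite (Nt_Dl Nt_z) (Nt_Dl Nt_z') !mulmx_e_x1 adj_sum mulmx_suml (lin_sum (lslot_lin _)).
  apply: eq_bigr => s _; rewrite mulmx_sumr (lin_sum (lslot_lin _)); apply: eq_bigr => t _.
  by rewrite eps_adj_eps_t ?adj_tens ?tensmx_mul ?(lslot_tens eps_lin); inM.
by rewrite -D_adj -?D_mul ?lslot_eps_D; inM.
Qed.

Lemma sum_eps_ya_b y : M y -> \sum_(t < k) eps (y *m a t) *: b t = adj (eps_t (adj y)).
Proof.
move=> My; rewrite eps_tE ?adj_sum; last by inM.
have -> : \sum_(t < k) adj (eps (a t *m adj y) *: b t) =
          lslot eps ((y *t 1%:M) *m \sum_(t < k) (adj (a t) *t adj (b t))).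
  rewrite mulmx_sumr (lin_sum (lslot_lin _)); apply: eq_bigr => t _.
  rewrite tensmx_mul mul1mx (lslot_tens eps_lin) adj_scale; congr (_ *: _).
  by rewrite [RHS]eps_adjV ?adjM ?adjK; inM.
rewrite sum_adj_a_b mulmx_x1_e (lin_sum (lslot_lin _)); apply: eq_bigr => t _.
by rewrite (lslot_tens eps_lin).
Qed.

Lemma eps_t_Nt_mul z w : Nt M D z -> M w -> eps_t (z *m w) = z *m eps_t w.
Proof.
move=> Nt_z Mw; rewrite !eps_t_lslot; try inM.
rewrite -(lslot_mulmx eps_lin) mulmxA -(wk_es HW (Nt_M Nt_z)).
have -> : e *m ((z *m w) *t 1%:M) = D z *m (w *t 1%:M).
  by rewrite (Nt_Dl Nt_z) -mulmxA tensmx_mul mulmx1.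
have [k' [c [d [Mcd ->]]]] := wk_DM HW (Nt_M Nt_z).
rewrite (lin_sum (tmap_lin _ _)) !mulmx_suml !(lin_sum (lslot_lin _)); apply: eq_bigr => s _.
have [Mc Md] := Mcd s.
rewrite (tmap_tens eps_s_lin (@lin_id _ n n)) !tensmx_mul !mulmx1 !(lslot_tens eps_lin).
by rewrite eps_eps_s_mul.
Qed.

Lemma sum_eps_ya_b_mul_Nt y z : M y -> Nt M D z ->
  (\sum_(t < k) eps (y *m a t) *: b t) *m z = \sum_(t < k) eps (y *m (a t *m z)) *: b t.
Proof.
move=> My Nt_z; rewrite sum_eps_ya_b // -[z]adjK -adjM -(eps_t_Nt_mul (Nt_adj Nt_z)); last by inM.
rewrite -adjM adjK -sum_eps_ya_b; last by inM.
have lslot_e w : \sum_(t < k) eps (w *m a t) *: b t = lslot eps ((w *t 1%:M) *m e).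
  rewrite mulmx_x1_e (lin_sum (lslot_lin _)); apply: eq_bigr => t _.
  by rewrite (lslot_tens eps_lin).
rewrite lslot_e.
have -> : (y *m z) *t (1%:M : 'M[C]_n) = (y *t 1%:M) *m (z *t 1%:M) by rewrite tensmx_mul mulmx1.
rewrite -mulmxA -(Nt_Dr Nt_z) (Nt_Dl Nt_z).
rewrite mulmx_e_x1 mulmx_sumr (lin_sum (lslot_lin _)); apply: eq_bigr => t _.
by rewrite tensmx_mul mul1mx (lslot_tens eps_lin) mulmxA.
Qed.

Lemma eps_t1 : eps_t 1%:M = 1%:M.
Proof. by rewrite eps_t_lslot ?tensmx11 ?mulmx1 ?lslot_eps_D; inM. Qed.

Lemma eps_s1 : eps_s 1%:M = 1%:M.
Proof. by rewrite eps_s_rslot ?tensmx11 ?mul1mx ?rslot_eps_D; inM. Qed.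

Lemma sum_a_Sb : \sum_(t < k) a t *m S (b t) = 1%:M.
Proof.
rewrite -eps_t1 /eps_t eE (lin_sum (tmap_lin id S)) (lin_sum (@mu_lin R n)).
by apply: eq_bigr => t _; rewrite (tmap_tens (@lin_id _ n n) S_lin) mu_tens.
Qed.

Lemma sum_Sa_b : \sum_(t < k) S (a t) *m b t = 1%:M.
Proof.
rewrite -eps_s1 /eps_s eE (lin_sum (tmap_lin S id)) (lin_sum (@mu_lin R n)).
by apply: eq_bigr => t _; rewrite (tmap_tens S_lin (@lin_id _ n n)) mu_tens.
Qed.

Lemma eps_s_Nt z : Nt M D z -> eps_s z = S z.
Proof.
move=> Nt_z; rewrite /eps_s (Nt_Dl Nt_z) mulmx_e_x1.
rewrite (lin_sum (tmap_lin S id)) (lin_sum (@mu_lin R n)) -[RHS]mulmx1 -sum_Sa_b mulmx_sumr.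
apply: eq_bigr => t _.
by rewrite (tmap_tens S_lin (@lin_id _ n n)) mu_tens S_mul ?mulmxA; inM.
Qed.

Lemma S_eps_s w : M w -> S (eps_s w) = eps_t (S w).
Proof. by move=> Mw; rewrite eps_t_S ?SK; inM. Qed.

Lemma D_S_Nt_l z : Nt M D z -> D (S z) = (1%:M *t S z) *m e.
Proof.
move=> Nt_z; rewrite (D_S (Nt_M Nt_z)) (Nt_Dl Nt_z) mulmx_e_x1.
rewrite (lin_sum (tmap_lin S S)) (lin_sum (@flip_lin R n)) -sum_Sb_Sa mulmx_sumr.
apply: eq_bigr => t _.
by rewrite (tmap_tens S_lin S_lin) flip_tens tensmx_mul mul1mx S_mul; inM.
Qed.

Lemma D_S_Nt_r z : Nt M D z -> D (S z) = e *m (1%:M *t S z).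
Proof.
move=> Nt_z; rewrite (D_S (Nt_M Nt_z)) (Nt_Dr Nt_z) mulmx_x1_e.
rewrite (lin_sum (tmap_lin S S)) (lin_sum (@flip_lin R n)) -sum_Sb_Sa mulmx_suml.
apply: eq_bigr => t _.
by rewrite (tmap_tens S_lin S_lin) flip_tens tensmx_mul mulmx1 S_mul; inM.
Qed.

Lemma eps_t_S_Nt z : Nt M D z -> eps_t (S z) = z.
Proof.
move=> Nt_z; rewrite /eps_t (D_S_Nt_l Nt_z) mulmx_1x_e.
rewrite (lin_sum (tmap_lin id S)) (lin_sum (@mu_lin R n)) -[RHS]mul1mx -sum_a_Sb mulmx_suml.
apply: eq_bigr => t _.
by rewrite (tmap_tens (@lin_id _ n n) S_lin) mu_tens S_mul ?SK ?mulmxA; inM.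
Qed.

Lemma eps_mul_S_Nt q z : M q -> Nt M D z -> eps (q *m z) = eps (q *m S z).
Proof. by move=> Mq Nt_z; rewrite -{1}(eps_t_S_Nt Nt_z) eps_mul_eps_t; inM. Qed.

Lemma eps_t_mul_S_Nt c z : M c -> Nt M D z -> eps_t (c *m z) = eps_t (c *m S z).
Proof.
move=> Mc Nt_z; rewrite !eps_tE; try inM.
by apply: eq_bigr => t _; rewrite !mulmxA eps_mul_S_Nt; inM.
Qed.

Definition D_retraction (X : 'M[C]_(n * n)) : 'M[C]_n :=
  mu (flip (tmap id (fun q => S (eps_t q)) X)).

Lemma D_retraction_lin : lin D_retraction.
Proof.
exact: lin_comp (@mu_lin R n) (lin_comp (@flip_lin R n) (tmap_lin _ _)).
Qed.

Lemma D_retraction_tens p q : D_retraction (p *t q) = S (eps_t q) *m p.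
Proof.
by rewrite /D_retraction (tmap_tens (@lin_id _ n n) (lin_comp S_lin eps_t_lin)) flip_tens mu_tens.
Qed.

Lemma D_retractionK y : M y -> D_retraction (D y) = y.
Proof.
move=> My; have := congr1 (fun X => mu (tmap id S X)) (wk_es HW (MS My)).
have [k' [c [d [Mcd Dy]]]] := wk_DM HW My.
rewrite /= mulmx_1x_e D_S // Dy (lin_sum (tmap_lin S S)) (lin_sum (@flip_lin R n)).
rewrite (lin_sum (tmap_lin _ id)) !(lin_sum (tmap_lin id S)) !(lin_sum (@mu_lin R n)).
have -> : \sum_(t < k) mu (tmap id S (a t *t (S y *m b t))) = y.
  rewrite -[RHS]mul1mx -sum_a_Sb mulmx_suml; apply: eq_bigr => t _.
  by rewrite (tmap_tens (@lin_id _ n n) S_lin) mu_tens S_mul ?SK ?mulmxA; inM.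
move=> <-; rewrite (lin_sum D_retraction_lin); apply: eq_bigr => s _.
have [Mc Md] := Mcd s.
rewrite D_retraction_tens (tmap_tens S_lin S_lin) flip_tens.
rewrite (tmap_tens eps_s_lin (@lin_id _ n n)) (tmap_tens (@lin_id _ n n) S_lin) mu_tens SK //.
by rewrite -[eps_s (S (d s))]SK ?S_eps_s ?SK; inM.
Qed.

Lemma D_retraction_mul_Nt x z : M x -> Nt M D z ->
  D_retraction (D x *m (1%:M *t z)) = x *m S z.
Proof.
move=> Mx Nt_z.
have -> : D_retraction (D x *m (1%:M *t z)) = D_retraction (D x *m (1%:M *t S z)).
  have [k' [c [d [Mcd ->]]]] := wk_DM HW Mx.
  rewrite !mulmx_suml !(lin_sum D_retraction_lin); apply: eq_bigr => s _.
  have [Mc Md] := Mcd s.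
  by rewrite !tensmx_mul !mulmx1 !D_retraction_tens eps_t_mul_S_Nt.
have -> : D x *m (1%:M *t S z) = D (x *m S z).
  by rewrite [RHS]D_mul ?(D_S_Nt_r Nt_z) ?mulmxA -?D_mul ?mulmx1; inM.
by rewrite D_retractionK; inM.
Qed.

Lemma rslot_e_Nt y z : M y -> Nt M D z ->
  rslot eps ((1%:M *t y) *m e *m (1%:M *t z)) = eps_s y *m S z.
Proof.
move=> My Nt_z.
have -> : rslot eps ((1%:M *t y) *m e *m (1%:M *t z)) =
          rslot eps ((1%:M *t y) *m e *m (1%:M *t S z)).
  rewrite eE !mulmx_sumr !mulmx_suml !(lin_sum (rslot_lin _)); apply: eq_bigr => t _.
  by rewrite !tensmx_mul !mul1mx !mulmx1 !(rslot_tens eps_lin) eps_mul_S_Nt; inM.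
rewrite -mulmxA -(D_S_Nt_r Nt_z) (D_S_Nt_l Nt_z) mulmxA tensmx_mul mul1mx -eps_s_rslot; last by inM.
by apply: S_inj; rewrite ?S_eps_s ?S_mul ?SK ?eps_t_Nt_mul ?S_eps_s; inM.
Qed.

Lemma sum_S_eps_t_bz_a z : Nt M D z -> \sum_(t < k) S (eps_t (b t *m z)) *m a t = S z.
Proof.
move=> Nt_z; rewrite -[S z]mul1mx -D_retraction_mul_Nt; try inM.
rewrite mulmx_e_1x (lin_sum D_retraction_lin); apply: eq_bigr => t _.
by rewrite D_retraction_tens.
Qed.

Lemma sum_S_eps_t_coproduct x z k' (c d : 'I_k' -> 'M[C]_n) :
  M x -> Nt M D z -> (forall s, M (c s) /\ M (d s)) -> D x = \sum_(s < k') (c s *t d s) ->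
  \sum_(s < k') \sum_(t < k) S (eps_t (d s *m eps_t (b t *m z))) *m (c s *m a t) = x *m S z.
Proof.
move=> Mx Nt_z Mcd Dx.
have Dx_e : D x *m e = D x by rewrite -D_mul ?mulmx1; inM.
rewrite -D_retraction_mul_Nt // -Dx_e -mulmxA mulmx_e_1x Dx mulmx_suml.
rewrite (lin_sum D_retraction_lin); apply: eq_bigr => s _; have [Mc Md] := Mcd s.
rewrite mulmx_sumr (lin_sum D_retraction_lin); apply: eq_bigr => t _.
by rewrite tensmx_mul D_retraction_tens eps_t_mul_eps_t; inM.
Qed.

Lemma sum_eps_adj_eps_t_b z z' : Nt M D z -> Nt M D z' ->
  \sum_(s < k) \sum_(t < k)
     eps (adj (eps_t (b s *m z')) *m eps_t (b t *m z)) *: (adj (a s) *m a t)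
  = adj (S z') *m S z.
Proof.
move=> Nt_z Nt_z'.
have -> : \sum_(s < k) \sum_(t < k)
   eps (adj (eps_t (b s *m z')) *m eps_t (b t *m z)) *: (adj (a s) *m a t)
  = rslot eps (adj (e *m (1%:M *t z')) *m (e *m (1%:M *t z))).
  rewrite !mulmx_e_1x adj_sum mulmx_suml (lin_sum (rslot_lin _)).
  apply: eq_bigr => s _; rewrite mulmx_sumr (lin_sum (rslot_lin _)); apply: eq_bigr => t _.
  by rewrite eps_adj_eps_t ?adj_tens ?tensmx_mul ?(rslot_tens eps_lin); inM.
rewrite adjM adj_e adj_tens adj_mx1 mulmxA -[_ *m e *m e]mulmxA e_idem rslot_e_Nt; try inM.
by rewrite eps_s_Nt ?(wk_Sadj HW (Nt_M Nt_z')) //; apply: Nt_adj.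
Qed.

Lemma sum_eps_yb_a_mul_S_Nt y z : M y -> Nt M D z ->
  \sum_(t < k) eps (y *m (b t *m z)) *: a t = (\sum_(t < k) eps (y *m b t) *: a t) *m S z.
Proof.
move=> My Nt_z; rewrite -eps_sE // -rslot_e_Nt // eE !mulmx_sumr !mulmx_suml.
rewrite (lin_sum (rslot_lin _)); apply: eq_bigr => t _.
by rewrite !tensmx_mul !mul1mx !mulmx1 (rslot_tens eps_lin) mulmxA.
Qed.

(** * The counital representation *)

(* Locked: letting unification unfold the coordinate matrices is very slow. *)
Definition pi := locked (ract (counital_rep M D S eps)).
Lemma piE : pi = ract (counital_rep M D S eps). Proof. by rewrite /pi -lock. Qed.

Local Notation G := (rgram (counital_rep M D S eps)).
Local Notation Eb := (@Eb R n).

Lemma cvec_lin : lin (@cvec R n).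
Proof. by move=> c x y; rewrite /cvec linearD linearZ /= linearD linearZ. Qed.

Lemma sum_cvec_Eb x : x = \sum_(i < n * n) cvec x i 0 *: Eb i.
Proof.
rewrite -{1}(mxvecK x) {1}(matrix_sum_delta (mxvec x)) big_ord1 linear_sum.
by apply: eq_bigr => i _; rewrite linearZ /cvec mxE.
Qed.

Lemma pi_entry x i j : pi x i j = cvec (eps_t (x *m Eb j)) i 0.
Proof. by rewrite piE mxE. Qed.

Lemma pi_cvec x y : pi x *m cvec y = cvec (eps_t (x *m y)).
Proof.
rewrite {2}(sum_cvec_Eb y) mulmx_sumr (lin_sum eps_t_lin) (lin_sum cvec_lin).
apply/matrixP=> i j; rewrite [j]ord1 summxE mxE; apply: eq_bigr => l _.
by rewrite -scalemxAr (linZ eps_t_lin) (linZ cvec_lin) [RHS]mxE pi_entry mulrC.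
Qed.

Lemma cvec_Eb i : cvec (Eb i) = delta_mx i 0.
Proof. by rewrite /cvec /Eb vec_mxK trmx_delta. Qed.

Lemma pi_lin : lin pi.
Proof.
move=> c x y; apply/matrixP=> i j.
rewrite [LHS]entry_mulmx_delta [RHS]entry_mulmx_delta -cvec_Eb.
rewrite [in RHS]mulmxDl -scalemxAl !pi_cvec.
by rewrite mulmxDl -scalemxAl eps_t_lin cvec_lin.
Qed.

Lemma gram_cvec p q : (adj (cvec p) *m G *m cvec q) 0 0 = eps (adj p *m q).
Proof.
rewrite [in RHS](sum_cvec_Eb p) [in RHS](sum_cvec_Eb q) adj_sum mulmx_suml (linf_sum eps_lin).
rewrite mxE; under eq_bigr => j _ do rewrite mxE mulr_suml.
rewrite exchange_big; apply: eq_bigr => i _.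
rewrite mulmx_sumr (linf_sum eps_lin); apply: eq_bigr => j _.
rewrite adj_scale -scalemxAl -scalemxAr !(linfZ eps_lin) /= mxE adjE.
by rewrite mulrA mulrAC.
Qed.

Section Representation.
Variables (d : nat) (rho : 'M[C]_n -> 'M[C]_d).
Hypothesis rho_rep : unital_star_rep M rho.

Lemma rho_lin : lin rho. Proof. by case: rho_rep. Qed.
Lemma rho1 : rho 1%:M = 1%:M. Proof. by case: rho_rep. Qed.
Lemma rho_mul x y : M x -> M y -> rho (x *m y) = rho x *m rho y.
Proof. by case: rho_rep => _ _ + _; apply. Qed.
Lemma rho_adj x : M x -> rho (adj x) = adj (rho x).
Proof. by case: rho_rep => _ _ _; apply. Qed.

Lemma rho_sum_cvec_Eb (f : 'M[C]_n -> 'M[C]_n) y : lin f ->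
  rho (f y) = \sum_(i < n * n) cvec y i 0 *: rho (f (Eb i)).
Proof.
move=> f_lin; rewrite {1}(sum_cvec_Eb y) (lin_sum f_lin) (lin_sum rho_lin).
by apply: eq_bigr => i _; rewrite (linZ f_lin) (linZ rho_lin).
Qed.

Lemma rho_sumZ (I : finType) (c : I -> C) (f : I -> 'M[C]_n) (xi : 'cV[C]_d) :
  \sum_(i : I) c i *: (rho (f i) *m xi) = rho (\sum_(i : I) c i *: f i) *m xi.
Proof.
rewrite (lin_sum rho_lin) mulmx_suml; apply: eq_bigr => i _.
by rewrite (linZ rho_lin) scalemxAl.
Qed.

Lemma rho_sum2 k1 k2 (F : 'I_k1 -> 'I_k2 -> 'M[C]_n) (xi : 'cV[C]_d) :
  rho (\sum_(s < k1) \sum_(t < k2) F s t) *m xi = \sum_(t < k2) \sum_(s < k1) rho (F s t) *m xi.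
Proof.
rewrite (lin_sum rho_lin) mulmx_suml.
by under eq_bigr => s _ do rewrite (lin_sum rho_lin) mulmx_suml; rewrite exchange_big.
Qed.

Local Notation P_pi_rho := (tmap pi rho e).

Definition U_pi_rho : 'M[C]_(d, n * n * d) :=
  \matrix_(i, q) rho (Eb (mxtens_unindex q).1) i (mxtens_unindex q).2.

Lemma U_pi_rho_tens y (xi : 'cV[C]_d) : U_pi_rho *m (cvec y *t xi) = rho y *m xi.
Proof.
apply/matrixP=> i j; rewrite [j]ord1 !mxE big_pidx.
under [RHS]eq_bigr => l _ do rewrite (rho_sum_cvec_Eb y (@lin_id _ n n)) summxE mulr_suml.
rewrite [RHS]exchange_big; apply: eq_bigr => l _; apply: eq_bigr => m _.
rewrite pidx00 tensmx_pidx !mxE mxtens_indexK /=.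
by rewrite -pidx00 mulrCA mulrA.
Qed.

Lemma tmap_pi_rho_tens k' (c c' : 'I_k' -> 'M[C]_n) y (xi : 'cV[C]_d) :
  tmap pi rho (\sum_(s < k') (c s *t c' s)) *m (cvec y *t xi)
  = \sum_(s < k') (cvec (eps_t (c s *m y)) *t (rho (c' s) *m xi)).
Proof.
rewrite (lin_sum (tmap_lin pi rho)) mulmx_suml; apply: eq_bigr => s _.
by rewrite (tmap_tens pi_lin rho_lin) tensmx_mul pi_cvec.
Qed.

Lemma P_pi_rho_tens y (xi : 'cV[C]_d) :
  P_pi_rho *m (cvec y *t xi) = \sum_(t < k) (cvec (eps_t (a t *m y)) *t (rho (b t) *m xi)).
Proof. by rewrite eE tmap_pi_rho_tens. Qed.

Lemma U_P_pi_rho z (xi : 'cV[C]_d) : Nt M D z ->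
  U_pi_rho *m (P_pi_rho *m (cvec z *t xi)) = rho z *m xi.
Proof.
move=> Nt_z; rewrite P_pi_rho_tens mulmx_sumr.
rewrite -[in RHS](sum_eps_t_az_b Nt_z) (lin_sum rho_lin) mulmx_suml; apply: eq_bigr => t _.
by rewrite U_pi_rho_tens mulmxA -rho_mul; inM.
Qed.

Lemma sum_cvec_eps_t_tens (p : 'I_k -> 'M[C]_n) (eta : 'I_k -> 'cV[C]_d) :
  (forall t, M (p t)) ->
  \sum_(t < k) (cvec (eps_t (p t)) *t eta t) =
  \sum_(r < k) (cvec (b r) *t \sum_(t < k) eps (a r *m p t) *: eta t).
Proof.
move=> Mp; under eq_bigr => t _ do rewrite eps_tE // (lin_sum cvec_lin) tensmx_suml.
rewrite exchange_big; apply: eq_bigr => r _; rewrite tensmx_sumr; apply: eq_bigr => t _.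
by rewrite (linZ cvec_lin) tensmxZl tensmxZr.
Qed.

Lemma P_pi_rho_Nt z (xi : 'cV[C]_d) : Nt M D z ->
  P_pi_rho *m (cvec 1%:M *t (rho z *m xi)) = P_pi_rho *m (cvec z *t xi).
Proof.
move=> Nt_z; rewrite !P_pi_rho_tens !sum_cvec_eps_t_tens => [|t|t]; try inM.
apply: eq_bigr => r _; congr (_ *t _).
rewrite [RHS]rho_sumZ -sum_eps_ya_b_mul_Nt; try inM.
rewrite mulmx_suml (lin_sum rho_lin) mulmx_suml; apply: eq_bigr => t _.
by rewrite mulmx1 -scalemxAl (linZ rho_lin) -scalemxAl rho_mul ?mulmxA; inM.
Qed.

Lemma P_pi_rho_isometry z z' (xi xi' : 'cV[C]_d) : Nt M D z -> Nt M D z' ->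
  inner (prod_rep D (counital_rep M D S eps) (hilb_rep rho))
        (P_pi_rho *m (cvec z *t xi)) (P_pi_rho *m (cvec z' *t xi'))
  = inner (hilb_rep rho) (rho z *m xi) (rho z' *m xi').
Proof.
move=> Nt_z Nt_z'.
have -> : inner (hilb_rep rho) (rho z *m xi) (rho z' *m xi') =
          (adj xi' *m rho (adj z' *m z) *m xi) 0 0.
  by rewrite /ip rgram_hilb_rep mulmx1 adjM rho_mul ?rho_adj ?mulmxA; inM.
transitivity
  ((adj (P_pi_rho *m (cvec z' *t xi')) *m (G *t 1%:M) *m (P_pi_rho *m (cvec z *t xi))) 0 0).
  by [].
rewrite -sum_eps_adj_eps_t_a // !P_pi_rho_tens adj_sum !mulmx_suml summxE.
rewrite (lin_sum rho_lin) mulmx_sumr mulmx_suml summxE; apply: eq_bigr => s _.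
rewrite mulmx_sumr summxE (lin_sum rho_lin) mulmx_sumr mulmx_suml summxE; apply: eq_bigr => t _.
rewrite !adj_tens !tensmx_mul pidx00 tensmx_pidx -pidx00 gram_cvec (linZ rho_lin).
rewrite -scalemxAr -scalemxAl [RHS]mxE; congr (_ * _).
by rewrite mulmx1 adjM rho_mul ?rho_adj ?mulmxA; inM.
Qed.

Lemma U_pi_rho_intertwines x z (xi : 'cV[C]_d) : M x -> Nt M D z ->
  U_pi_rho *m (tmap pi rho (D x) *m (P_pi_rho *m (cvec z *t xi))) =
  rho x *m (U_pi_rho *m (P_pi_rho *m (cvec z *t xi))).
Proof.
move=> Mx Nt_z; rewrite U_P_pi_rho // [RHS]mulmxA -rho_mul; try inM.
have [k' [c [c' [Mcc' Dx]]]] := wk_DM HW Mx.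
rewrite -(sum_eps_t_coproduct Mx Nt_z Mcc' Dx) P_pi_rho_tens rho_sum2 !mulmx_sumr.
apply: eq_bigr => t _; rewrite Dx tmap_pi_rho_tens mulmx_sumr.
apply: eq_bigr => s _; have [Mc Mc'] := Mcc' s.
by rewrite U_pi_rho_tens !rho_mul ?mulmxA; inM.
Qed.

Lemma unit_equiv_pi_rho :
  unit_equiv M (prod_rep D (counital_rep M D S eps) (hilb_rep rho)) (hilb_rep rho).
Proof.
apply: (@unit_equiv_prod_hilb_rep _ n M D (counital_rep M D S eps) (hilb_rep rho) d rho U_pi_rho
  (fun v => P_pi_rho *m (cvec 1%:M *t v))); rewrite -?piE.
- by move=> c v w; rewrite tensmxDr tensmxZr mulmxDr scalemxAr.
- by move=> v; rewrite piE; apply: prod_rep_space_gen => //; exists 1%:M; split=> //; apply: Nt1.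
- by move=> v; rewrite U_P_pi_rho ?rho1 ?mul1mx //; apply: Nt1.
- by move=> _ xi [z [Nt_z ->]] _; rewrite U_P_pi_rho // P_pi_rho_Nt.
- move=> _ xi _ xi' [z [Nt_z ->]] _ [z' [Nt_z' ->]] _.
  by rewrite !U_P_pi_rho // P_pi_rho_isometry.
- by move=> x _ xi Mx [z [Nt_z ->]] _; rewrite ract_prod_rep -piE U_pi_rho_intertwines.
Qed.

Local Notation P_rho_pi := (tmap rho pi e).

Definition U_rho_pi : 'M[C]_(d, d * (n * n)) :=
  \matrix_(i, q) rho (S (Eb (mxtens_unindex q).2)) i (mxtens_unindex q).1.

Lemma U_rho_pi_tens y (xi : 'cV[C]_d) : U_rho_pi *m (xi *t cvec y) = rho (S y) *m xi.
Proof.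
apply/matrixP=> i j; rewrite [j]ord1 !mxE big_pidx.
under [RHS]eq_bigr => l _ do rewrite (rho_sum_cvec_Eb y S_lin) summxE mulr_suml.
apply: eq_bigr => l _; apply: eq_bigr => m _.
rewrite pidx00 tensmx_pidx !mxE mxtens_indexK /=.
by rewrite -pidx00 [RHS]mulrAC [RHS]mulrC [X in _ * X = _]mulrC.
Qed.

Lemma tmap_rho_pi_tens k' (c c' : 'I_k' -> 'M[C]_n) y (xi : 'cV[C]_d) :
  tmap rho pi (\sum_(s < k') (c s *t c' s)) *m (xi *t cvec y)
  = \sum_(s < k') ((rho (c s) *m xi) *t cvec (eps_t (c' s *m y))).
Proof.
rewrite (lin_sum (tmap_lin rho pi)) mulmx_suml; apply: eq_bigr => s _.
by rewrite (tmap_tens rho_lin pi_lin) tensmx_mul pi_cvec.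
Qed.

Lemma P_rho_pi_tens y (xi : 'cV[C]_d) :
  P_rho_pi *m (xi *t cvec y) = \sum_(t < k) ((rho (a t) *m xi) *t cvec (eps_t (b t *m y))).
Proof. by rewrite eE tmap_rho_pi_tens. Qed.

Lemma U_P_rho_pi z (xi : 'cV[C]_d) : Nt M D z ->
  U_rho_pi *m (P_rho_pi *m (xi *t cvec z)) = rho (S z) *m xi.
Proof.
move=> Nt_z; rewrite P_rho_pi_tens mulmx_sumr.
rewrite -[in RHS](sum_S_eps_t_bz_a Nt_z) (lin_sum rho_lin) mulmx_suml; apply: eq_bigr => t _.
by rewrite U_rho_pi_tens mulmxA -rho_mul; inM.
Qed.

Lemma sum_tens_cvec_eps_t (p : 'I_k -> 'M[C]_n) (eta : 'I_k -> 'cV[C]_d) :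
  (forall t, M (p t)) ->
  \sum_(t < k) (eta t *t cvec (eps_t (p t))) =
  \sum_(r < k) ((\sum_(t < k) eps (a r *m p t) *: eta t) *t cvec (b r)).
Proof.
move=> Mp; under eq_bigr => t _ do rewrite eps_tE // (lin_sum cvec_lin) tensmx_sumr.
rewrite exchange_big; apply: eq_bigr => r _; rewrite tensmx_suml; apply: eq_bigr => t _.
by rewrite (linZ cvec_lin) tensmxZl tensmxZr.
Qed.

Lemma P_rho_pi_Nt z (xi : 'cV[C]_d) : Nt M D z ->
  P_rho_pi *m ((rho (S z) *m xi) *t cvec 1%:M) = P_rho_pi *m (xi *t cvec z).
Proof.
move=> Nt_z; rewrite !P_rho_pi_tens !sum_tens_cvec_eps_t => [|t|t]; try inM.
apply: eq_bigr => r _; congr (_ *t _).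
rewrite [RHS]rho_sumZ sum_eps_yb_a_mul_S_Nt; try inM.
rewrite mulmx_suml (lin_sum rho_lin) mulmx_suml; apply: eq_bigr => t _.
by rewrite mulmx1 -scalemxAl (linZ rho_lin) -scalemxAl rho_mul ?mulmxA; inM.
Qed.

Lemma P_rho_pi_isometry z z' (xi xi' : 'cV[C]_d) : Nt M D z -> Nt M D z' ->
  inner (prod_rep D (hilb_rep rho) (counital_rep M D S eps))
        (P_rho_pi *m (xi *t cvec z)) (P_rho_pi *m (xi' *t cvec z'))
  = inner (hilb_rep rho) (rho (S z) *m xi) (rho (S z') *m xi').
Proof.
move=> Nt_z Nt_z'.
have -> : inner (hilb_rep rho) (rho (S z) *m xi) (rho (S z') *m xi') =
          (adj xi' *m rho (adj (S z') *m S z) *m xi) 0 0.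
  by rewrite /ip rgram_hilb_rep mulmx1 adjM rho_mul ?rho_adj ?mulmxA; inM.
transitivity
  ((adj (P_rho_pi *m (xi' *t cvec z')) *m (1%:M *t G) *m (P_rho_pi *m (xi *t cvec z))) 0 0).
  by [].
rewrite -sum_eps_adj_eps_t_b // !P_rho_pi_tens adj_sum !mulmx_suml summxE.
rewrite (lin_sum rho_lin) mulmx_sumr mulmx_suml summxE; apply: eq_bigr => s _.
rewrite mulmx_sumr summxE (lin_sum rho_lin) mulmx_sumr mulmx_suml summxE; apply: eq_bigr => t _.
rewrite !adj_tens !tensmx_mul pidx00 tensmx_pidx -pidx00 gram_cvec (linZ rho_lin).
rewrite -scalemxAr -scalemxAl [RHS]mxE mulrC; congr (_ * _).
by rewrite mulmx1 adjM rho_mul ?rho_adj ?mulmxA; inM.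
Qed.

Lemma U_rho_pi_intertwines x z (xi : 'cV[C]_d) : M x -> Nt M D z ->
  U_rho_pi *m (tmap rho pi (D x) *m (P_rho_pi *m (xi *t cvec z))) =
  rho x *m (U_rho_pi *m (P_rho_pi *m (xi *t cvec z))).
Proof.
move=> Mx Nt_z; rewrite U_P_rho_pi // [RHS]mulmxA -rho_mul; try inM.
have [k' [c [c' [Mcc' Dx]]]] := wk_DM HW Mx.
rewrite -(sum_S_eps_t_coproduct Mx Nt_z Mcc' Dx) P_rho_pi_tens rho_sum2 !mulmx_sumr.
apply: eq_bigr => t _; rewrite Dx tmap_rho_pi_tens mulmx_sumr.
apply: eq_bigr => s _; have [Mc Mc'] := Mcc' s.
by rewrite U_rho_pi_tens !rho_mul ?mulmxA; inM.
Qed.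

Lemma unit_equiv_rho_pi :
  unit_equiv M (prod_rep D (hilb_rep rho) (counital_rep M D S eps)) (hilb_rep rho).
Proof.
apply: (@unit_equiv_prod_hilb_rep _ n M D (hilb_rep rho) (counital_rep M D S eps) d rho U_rho_pi
  (fun v => P_rho_pi *m (v *t cvec 1%:M))); rewrite -?piE.
- by move=> c v w; rewrite tensmxDl tensmxZl mulmxDr scalemxAr.
- by move=> v; rewrite piE; apply: prod_rep_space_gen => //; exists 1%:M; split=> //; apply: Nt1.
- by move=> v; rewrite U_P_rho_pi ?(wk_S1 HW) ?rho1 ?mul1mx //; apply: Nt1.
- by move=> xi _ _ [z [Nt_z ->]]; rewrite U_P_rho_pi // P_rho_pi_Nt.
- move=> xi _ xi' _ _ [z [Nt_z ->]] _ [z' [Nt_z' ->]].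
  by rewrite !U_P_rho_pi // P_rho_pi_isometry.
- by move=> x xi _ Mx _ [z [Nt_z ->]]; rewrite ract_prod_rep -piE U_rho_pi_intertwines.
Qed.

End Representation.

End WeakKacAlgebra.

Theorem proposition2p2p1 (R : realType) (n : nat) (M : 'M[R[i]]_n -> Prop)
  (D : 'M[R[i]]_n -> 'M[R[i]]_(n * n)) (S : 'M[R[i]]_n -> 'M[R[i]]_n)
  (eps : 'M[R[i]]_n -> R[i]) (HW : weak_Kac M D S eps)
  (d : nat) (rho : 'M[R[i]]_n -> 'M[R[i]]_d) (Hrho : unital_star_rep M rho) :
  unit_equiv M (prod_rep D (counital_rep M D S eps) (hilb_rep rho)) (hilb_rep rho) /\
  unit_equiv M (prod_rep D (hilb_rep rho) (counital_rep M D S eps)) (hilb_rep rho).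
Proof.
have [k [a [b [ab_M eE]]]] := wk_DM HW (M1 HW).
split.
- exact: (unit_equiv_pi_rho HW ab_M eE Hrho).
- exact: (unit_equiv_rho_pi HW ab_M eE Hrho).
Qed.
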